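(* Let $G=D\oplus R$ be an abelian group with $D$ divisible and $R$ reduced. Then $G$ is super directly finite if and only if both $D$ and $R$ are super directly finite.
   Context: All groups are abelian. A group $G$ is directly finite if there is no decomposition $G=A\oplus C$ with $C\ne0$ and $A\cong G$; $G$ is super directly finite ($G\in\mathcal{DF}^s$) if every epimorphic image of $G$ (including $G$) is directly finite. A group is reduced if it has no nonzero divisible subgroup. *)

From HB Require Import structures.
From mathcomp Require Import all_boot all_order all_algebra.
Set Implicit Arguments. Unset Strict Implicit. Unset Printing Implicit Defensive.
Import GRing.Theory.
Local Open Scope ring_scope.

Definition subgroup (G : zmodType) (S : G -> Prop) : Prop :=
  S 0 /\ (forall x y, S x -> S y -> S (x - y)).

Definition is_hom (G H : zmodType) (f : G -> H) : Prop :=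
  forall x y, f (x - y) = f x - f y.

(* G is directly finite: there is no internal decomposition G = A (+) C
   with C <> 0 and A isomorphic to G (isomorphism G ~ A given by an injective
   homomorphism f : G -> G with image exactly A). *)
Definition directly_finite (G : zmodType) : Prop :=
  ~ exists (A C : G -> Prop) (f : G -> G),
      subgroup A /\ subgroup C /\
      (forall x, A x -> C x -> x = 0) /\
      (forall g, exists a c, A a /\ C c /\ g = a + c) /\
      (exists c, C c /\ c <> 0) /\
      is_hom f /\ injective f /\ (forall a, A a <-> exists g, f g = a).

Definition super_directly_finite (G : zmodType) : Prop :=
  forall (H : zmodType) (p : G -> H),
    is_hom p -> (forall h, exists g, p g = h) -> directly_finite H.

Definition divisible (G : zmodType) : Prop :=
  forall (x : G) (n : nat), (0 < n)%N -> exists y : G, y *+ n = x.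

Definition reduced (G : zmodType) : Prop :=
  forall S : G -> Prop, subgroup S ->
    (forall x (n : nat), S x -> (0 < n)%N -> exists y, S y /\ y *+ n = x) ->
    forall x, S x -> x = 0.

From HB Require Import structures.
From mathcomp Require Import all_boot all_order all_algebra.
From mathcomp Require Import boolp classical_sets ring zify.
Set Implicit Arguments. Unset Strict Implicit. Unset Printing Implicit Defensive.
Import GRing.Theory Num.Theory.
Local Open Scope ring_scope.

(* Only the converse needs an argument, and it does not use that R is reduced.  Let
   q : D * R -> H be onto and H = A (+) C with f : H ~ A and C <> 0.
   (1) C lies in the maximal divisible subgroup dH of H: otherwise the decomposition
   passes to H / dH, an epimorphic image of R.
   (2) C has no element of prime order p.  If q(D) had infinitely many elements of order
   p, a sequence of them independent over Z/p would give, by injectivity of divisible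
   groups, a homomorphism H -> Y = (+)_k Z(p^oo) mapping q(D) onto Y; but Y is not
   directly finite.  The same argument modulo q(D), now using R, shows that dH has
   finitely many elements of order p.  f maps this finite set injectively into itself,
   missing the nonzero elements of order p of C.
   (3) So C is torsion-free.  For 0 <> c = 2 c1 in C, the decomposition survives modulo
   the f-closed subgroup generated by c, where c1 becomes an element of order 2 of the
   new complement, contradicting (2). *)

(** * Subgroups, homomorphisms and quotients *)

Section Subgroup.
Variables (G : zmodType) (S : G -> Prop) (HS : subgroup S).

Lemma subgroup0 : S 0. Proof. by case: HS. Qed.
Lemma subgroupB x y : S x -> S y -> S (x - y). Proof. by case: HS => _; apply. Qed.
Lemma subgroupN x : S x -> S (- x).
Proof. by move=> Sx; rewrite -sub0r; apply: subgroupB => //; exact: subgroup0. Qed.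
Lemma subgroupD x y : S x -> S y -> S (x + y).
Proof. by move=> Sx Sy; rewrite -[y]opprK; apply: subgroupB => //; exact: subgroupN. Qed.
Lemma subgroupMn x n : S x -> S (x *+ n).
Proof.
move=> Sx; elim: n => [|n IH]; first by rewrite mulr0n; exact: subgroup0.
by rewrite mulrS; apply: subgroupD.
Qed.
Lemma subgroupMz x (z : int) : S x -> S (x *~ z).
Proof.
by move=> Sx; case: z => n; rewrite ?NegzE ?mulrNz; [|apply: subgroupN]; apply: subgroupMn.
Qed.
Lemma subgroup_sum I (r : seq I) (P : pred I) (F : I -> G) :
  (forall i, P i -> S (F i)) -> S (\sum_(i <- r | P i) F i).
Proof. by move=> SF; apply: big_ind => //; [exact: subgroup0 | exact: subgroupD]. Qed.

End Subgroup.

Lemma subgroupT (G : zmodType) : subgroup (fun _ : G => True). Proof. by []. Qed.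

Definition additive_on (G H : zmodType) (T : G -> Prop) (f : G -> H) :=
  forall x y, T x -> T y -> f (x - y) = f x - f y.

Section AdditiveOn.
Variables (G H : zmodType) (T : G -> Prop) (HT : subgroup T) (f : G -> H).
Hypothesis fT : additive_on T f.

Lemma additive_on0 : f 0 = 0.
Proof. by have := fT (subgroup0 HT) (subgroup0 HT); rewrite !subrr. Qed.
Lemma additive_onN x : T x -> f (- x) = - f x.
Proof.
by move=> Tx; have := fT (subgroup0 HT) Tx; rewrite sub0r additive_on0 sub0r.
Qed.
Lemma additive_onD x y : T x -> T y -> f (x + y) = f x + f y.
Proof.
move=> Tx Ty; rewrite -{1}[y]opprK fT ?additive_onN ?opprK //; exact: subgroupN.
Qed.
Lemma additive_onMn x n : T x -> f (x *+ n) = f x *+ n.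
Proof.
move=> Tx; elim: n => [|n IH]; first by rewrite !mulr0n additive_on0.
by rewrite !mulrS additive_onD ?IH //; exact: subgroupMn.
Qed.
Lemma additive_onMz x (z : int) : T x -> f (x *~ z) = f x *~ z.
Proof.
move=> Tx; case: z => n; rewrite ?NegzE ?mulrNz ?additive_onN ?additive_onMn //.
exact: subgroupMn.
Qed.

End AdditiveOn.

Section Hom.
Variables (G H : zmodType) (f : G -> H) (hf : is_hom f).
Let fT : additive_on (fun _ => True) f. Proof. by move=> x y _ _; exact: hf. Qed.

Lemma hom0 : f 0 = 0. Proof. exact: (additive_on0 (@subgroupT G) fT). Qed.
Lemma homD x y : f (x + y) = f x + f y.
Proof. by apply: (additive_onD (@subgroupT G) fT). Qed.
Lemma homMn x n : f (x *+ n) = f x *+ n.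
Proof. by apply: (additive_onMn (@subgroupT G) fT). Qed.
Lemma homMz x (z : int) : f (x *~ z) = f x *~ z.
Proof. by apply: (additive_onMz (@subgroupT G) fT). Qed.
Lemma hom_sum I (r : seq I) (P : pred I) (F : I -> G) :
  f (\sum_(i <- r | P i) F i) = \sum_(i <- r | P i) f (F i).
Proof. exact: (big_morph f homD hom0). Qed.

End Hom.

Lemma is_hom_comp (G H K : zmodType) (f : G -> H) (g : H -> K) :
  is_hom f -> is_hom g -> is_hom (g \o f).
Proof. by move=> hf hg x y /=; rewrite hf hg. Qed.

Definition img (G H : zmodType) (f : G -> H) (S : G -> Prop) : H -> Prop :=
  fun y => exists x, S x /\ y = f x.

Lemma subgroup_img (G H : zmodType) (f : G -> H) (S : G -> Prop) :
  is_hom f -> subgroup S -> subgroup (img f S).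
Proof.
move=> hf HS; split; first by exists 0; rewrite hom0 //; split => //; exact: subgroup0.
by move=> _ _ [x [Sx ->]] [y [Sy ->]]; exists (x - y); split; [exact: subgroupB | rewrite hf].
Qed.

Section Quotient.
Variables (G : zmodType) (S : G -> Prop) (HS : subgroup S).

Definition qclass (x : G) : G -> Prop := fun y => S (y - x).
(* The (unused) proof argument lets the zmodType instance below be found from [quot HS]. *)
Definition quot (_ : subgroup S) := {P : G -> Prop | exists x, P = qclass x}.
Local Notation Q := (quot HS).

Definition qpi (x : G) : Q := exist _ (qclass x) (ex_intro _ x erefl).
Definition qrep (P : Q) : G := projT1 (cid (proj2_sig P)).

Lemma quot_eq (P P' : Q) : sval P = sval P' -> P = P'.
Proof. by case: P P' => [P hP] [P' hP'] /= e; subst P'; congr exist; exact: Prop_irrelevance. Qed.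

Lemma qpiE x y : qpi x = qpi y <-> S (x - y).
Proof.
split=> [/(congr1 sval) /= e | Sxy].
  have : qclass x x by rewrite /qclass subrr; exact: subgroup0.
  by rewrite e.
apply: quot_eq; apply: funext => z; apply: propext; rewrite /= /qclass.
split=> Sz; first by have := subgroupD HS Sz Sxy; rewrite addrA subrK.
by have := subgroupB HS Sz Sxy; rewrite opprB addrA subrK.
Qed.

Lemma qrepK P : qpi (qrep P) = P.
Proof. by rewrite /qrep; case: cid => x /= e; apply: quot_eq; rewrite /= e. Qed.

Lemma qpi_surj P : exists x, P = qpi x.
Proof. by exists (qrep P); rewrite qrepK. Qed.

Lemma qrep_qpi x : S (qrep (qpi x) - x).
Proof. by apply/qpiE; rewrite qrepK. Qed.

Let qadd (P P' : Q) := qpi (qrep P + qrep P').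
Let qopp (P : Q) := qpi (- qrep P).

Let qaddE x y : qadd (qpi x) (qpi y) = qpi (x + y).
Proof. by apply/qpiE; have := subgroupD HS (qrep_qpi x) (qrep_qpi y); rewrite opprD addrACA. Qed.

Let qoppE x : qopp (qpi x) = qpi (- x).
Proof. by apply/qpiE; rewrite opprK addrC; have := subgroupN HS (qrep_qpi x); rewrite opprB. Qed.

Let qaddA : associative qadd.
Proof.
move=> P1 P2 P3; case: (qpi_surj P1) (qpi_surj P2) (qpi_surj P3) => [x ->] [y ->] [z ->].
by rewrite !qaddE addrA.
Qed.
Let qaddC : commutative qadd.
Proof.
by move=> P1 P2; case: (qpi_surj P1) (qpi_surj P2) => [x ->] [y ->]; rewrite !qaddE addrC.
Qed.
Let qadd0 : left_id (qpi 0) qadd.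
Proof. by move=> P; have [x ->] := qpi_surj P; rewrite qaddE add0r. Qed.
Let qaddN : left_inverse (qpi 0) qopp qadd.
Proof. by move=> P; have [x ->] := qpi_surj P; rewrite qoppE qaddE addNr. Qed.

HB.instance Definition _ := gen_eqMixin Q.
HB.instance Definition _ := gen_choiceMixin Q.
HB.instance Definition _ := GRing.isZmodule.Build Q qaddA qaddC qadd0 qaddN.

Lemma qpi_hom : is_hom qpi.
Proof. by move=> x y; rewrite -[qpi x - qpi y]/(qadd (qpi x) (qopp (qpi y))) qoppE qaddE. Qed.

Lemma qpi_eq0 x : qpi x = 0 <-> S x.
Proof. by rewrite -[0 : Q]/(qpi 0) qpiE subr0. Qed.

End Quotient.

(** * Divisible parts and self-decompositions *)

Definition divisible_in (G : zmodType) (S : G -> Prop) :=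
  forall x n, S x -> (0 < n)%N -> exists y, S y /\ y *+ n = x.

Lemma divisible_in_img (G H : zmodType) (f : G -> H) (S : G -> Prop) :
  is_hom f -> divisible_in S -> divisible_in (img f S).
Proof.
move=> hf dS _ n [x [Sx ->]] n0; have [y [Sy <-]] := dS _ _ Sx n0.
by exists (f y); split; [exists y | rewrite homMn].
Qed.

Section DivisiblePart.
Variable H : zmodType.

Definition divisible_part (x : H) := exists S : H -> Prop, [/\ subgroup S, divisible_in S & S x].

Lemma divisible_part_max (S : H -> Prop) :
  subgroup S -> divisible_in S -> forall x, S x -> divisible_part x.
Proof. by move=> HS dS x Sx; exists S. Qed.

Lemma subgroup_divisible_part : subgroup divisible_part.
Proof.
split.
  exists (fun x => x = 0); split => //; first by split=> // x y -> ->; rewrite subrr.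
  by move=> x n -> _; exists 0; rewrite mul0rn.
move=> x y [S1 [H1 d1 S1x]] [S2 [H2 d2 S2y]].
exists (fun z => exists a b, [/\ S1 a, S2 b & z = a + b]); split.
- split; first by exists 0, 0; split; rewrite ?addr0 //; exact: subgroup0.
  move=> _ _ [a1 [b1 [A1 B1 ->]]] [a2 [b2 [A2 B2 ->]]].
  exists (a1 - a2), (b1 - b2); split; [exact: subgroupB | exact: subgroupB |].
  by rewrite opprD addrACA.
- move=> _ n [a [b [Aa Bb ->]]] n0.
  have [[a' [Aa' <-]] [b' [Bb' <-]]] := (d1 _ _ Aa n0, d2 _ _ Bb n0).
  by exists (a' + b'); split; [exists a', b' | rewrite mulrnDl].
- by exists x, (- y); split => //; exact: subgroupN.
Qed.

Lemma divisible_in_divisible_part : divisible_in divisible_part.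
Proof.
move=> x n [S [HS dS Sx]] n0; have [y [Sy <-]] := dS _ _ Sx n0.
by exists y; split => //; exists S.
Qed.

End DivisiblePart.

Record complementary (H : zmodType) (A C : H -> Prop) : Prop := Complementary {
  compl_subl : subgroup A;
  compl_subr : subgroup C;
  compl_cap : forall x, A x -> C x -> x = 0;
  compl_sum : forall g, exists a c, A a /\ C c /\ g = a + c }.

Lemma complementary_sym (H : zmodType) (A C : H -> Prop) :
  complementary A C -> complementary C A.
Proof.
case=> HA HC cap sum; split=> // [x Cx Ax | g]; first exact: cap.
by have [a [c [Aa [Cc ->]]]] := sum g; exists c, a; rewrite addrC.
Qed.

Section Complementary.
Variables (H : zmodType) (A C : H -> Prop).
Hypothesis hAC : complementary A C.
Let HA := compl_subl hAC.
Let HC := compl_subr hAC.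

Lemma compl_unique a c a' c' : A a -> C c -> A a' -> C c' -> a + c = a' + c' ->
  a = a' /\ c = c'.
Proof.
move=> Aa Cc Aa' Cc' e.
have e1 : a - a' = c' - c by rewrite -[a](addrK c) e addrAC (addrC a') addrK.
have z : a - a' = 0.
  by apply: (compl_cap hAC); [exact: subgroupB | rewrite e1; exact: subgroupB].
split; first by apply/eqP; rewrite -subr_eq0 z.
by apply/eqP; rewrite -subr_eq0 -oppr_eq0 opprB -e1 z.
Qed.

Lemma divisible_part_projl a c : A a -> C c -> divisible_part (a + c) -> divisible_part a.
Proof.
move=> Aa Cc [S [HS dS Sac]].
pose SA a' := A a' /\ exists c', C c' /\ S (a' + c').
apply: (@divisible_part_max _ SA); last by split => //; exists c.
- split; first by split; [exact: subgroup0 | exists 0; rewrite addr0; split; exact: subgroup0].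
  move=> x y [Ax [cx [Cx Sx]]] [Ay [cy [Cy Sy]]]; split; first exact: subgroupB.
  exists (cx - cy); split; first exact: subgroupB.
  by have := subgroupB HS Sx Sy; rewrite opprD addrACA.
- move=> x n [Ax [cx [Cx Sx]]] n0; have [y [Sy ey]] := dS _ _ Sx n0.
  have [a1 [c1 [A1 [C1 e1]]]] := compl_sum hAC y.
  have [<- _] : a1 *+ n = x /\ c1 *+ n = cx.
    apply: compl_unique => //; try exact: subgroupMn.
    by rewrite -mulrnDl -e1.
  by exists a1; split => //; split => //; exists c1; rewrite -e1.
Qed.

Lemma divisible_in_part_l : divisible_in (fun a => A a /\ divisible_part a).
Proof.
move=> x n [Ax dx] n0; have [y [dy ey]] := divisible_in_divisible_part dx n0.
have [a [c [Aa [Cc eac]]]] := compl_sum hAC y.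
have [<- _] : a *+ n = x /\ c *+ n = 0.
  apply: compl_unique => //; try exact: subgroupMn; first exact: subgroup0.
  by rewrite -mulrnDl -eac ey addr0.
by exists a; split => //; split => //; apply: (divisible_part_projl Aa Cc); rewrite -eac.
Qed.

End Complementary.

Record self_decomposition (H : zmodType) (A C : H -> Prop) (f : H -> H) : Prop :=
  SelfDecomposition {
    sdec_compl : complementary A C;
    sdec_hom : is_hom f;
    sdec_inj : injective f;
    sdec_im : forall a, A a <-> exists g, f g = a }.

Lemma directly_finiteP (H : zmodType) : directly_finite H <->
  ~ exists A C (f : H -> H), self_decomposition A C f /\ exists c, C c /\ c <> 0.
Proof.
split=> DF [A [C [f]]].
  by move=> [[[HA HC cap sum] hf fi fim] nz]; apply: DF; exists A, C, f.
by move=> [HA [HC [cap [sum [nz [hf [fi fim]]]]]]]; apply: DF; exists A, C, f.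
Qed.

Section SelfDecomposition.
Variables (H : zmodType) (A C : H -> Prop) (f : H -> H).
Hypothesis dec : self_decomposition A C f.
Let hAC := sdec_compl dec.
Let HC := compl_subr hAC.
Let hf := sdec_hom dec.

Lemma sdec_fA g : A (f g). Proof. by apply/(sdec_im dec); exists g. Qed.

Section QuotientDecomposition.
Variables (S : H -> Prop) (HS : subgroup S).
Hypotheses (Sf : forall x, S x -> S (f x)) (Sf_inv : forall x, S (f x) -> S x).
Hypothesis S_projl : forall a c, A a -> C c -> S (a + c) -> S a.

Definition quot_map (z : quot HS) : quot HS := qpi HS (f (qrep z)).

Lemma quot_mapE x : quot_map (qpi HS x) = qpi HS (f x).
Proof. by apply/qpiE; rewrite -hf; apply: Sf; exact: qrep_qpi. Qed.

Lemma quot_self_decomposition :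
  self_decomposition (img (qpi HS) A) (img (qpi HS) C) quot_map.
Proof.
have qpiH := qpi_hom HS.
split; first split; [exact: subgroup_img (compl_subl hAC) | exact: subgroup_img | | | | |].
- move=> _ [a [Aa ->]] [c [Cc /qpiE Sac]]; apply/qpi_eq0.
  exact: (S_projl Aa (subgroupN HC Cc)).
- move=> z; have [h ->] := qpi_surj z; have [a [c [Aa [Cc ->]]]] := compl_sum hAC h.
  by exists (qpi HS a), (qpi HS c); split; [exists a | split; [exists c | rewrite homD]].
- move=> z z'; have [[x ->] [y ->]] := (qpi_surj z, qpi_surj z').
  by rewrite -qpiH !quot_mapE hf qpiH.
- move=> z z'; have [[x ->] [y ->]] := (qpi_surj z, qpi_surj z').
  by rewrite !quot_mapE => /qpiE; rewrite -hf => /Sf_inv Sxy; apply/qpiE.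
- move=> z; split=> [[a [Aa ->]] | [g <-]].
    by have [g <-] := (sdec_im dec a).1 Aa; exists (qpi HS g); rewrite quot_mapE.
  by exists (f (qrep g)); split => //; exact: sdec_fA.
Qed.

End QuotientDecomposition.

Lemma divisible_part_f x : divisible_part x -> divisible_part (f x).
Proof.
move=> [S [HS dS Sx]]; apply: (divisible_part_max (subgroup_img hf HS)).
  exact: divisible_in_img.
by exists x.
Qed.

Lemma divisible_part_f_inv x : divisible_part (f x) -> divisible_part x.
Proof.
have Hd := subgroup_divisible_part H.
apply: (@divisible_part_max _ (fun g => divisible_part (f g))).
- split=> [|a b da db]; first by rewrite hom0 //; exact: (subgroup0 Hd).
  by rewrite hf; exact: (subgroupB Hd).
- move=> g n dg n0.
  have [y [[Ay dy] ey]] := divisible_in_part_l hAC (conj (sdec_fA g) dg) n0.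
  have [g' eg'] := (sdec_im dec y).1 Ay.
  by exists g'; split; [rewrite eg' | apply: (sdec_inj dec); rewrite homMn // eg'].
Qed.

End SelfDecomposition.

(** * Extending homomorphisms into divisible groups *)

Section DivisibleExtension.
Variables (G Y : zmodType) (divY : divisible Y) (S : G -> Prop) (phi0 : G -> Y).
Hypotheses (HS : subgroup S) (phi0S : additive_on S phi0).

Definition partial_extension (t : (G -> Prop) * (G -> Y)) :=
  [/\ subgroup t.1, (forall x, S x -> t.1 x), additive_on t.1 t.2 &
      forall x, S x -> t.2 x = phi0 x].

Local Notation ext := {t | partial_extension t}.
Local Notation dom t := (sval t).1.
Local Notation fun_of t := (sval t).2.

Definition ext_le (t t' : ext) : bool :=
  `[< (forall x, dom t x -> dom t' x) /\ (forall x, dom t x -> fun_of t' x = fun_of t x) >].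

Lemma partial_extension0 : partial_extension (S, phi0). Proof. by split. Qed.
Local Notation ext0 := (exist _ _ partial_extension0 : ext).

Lemma ext_le_refl t : ext_le t t. Proof. exact/asboolP. Qed.

Lemma ext_le_trans t1 t2 t3 : ext_le t1 t2 -> ext_le t2 t3 -> ext_le t1 t3.
Proof.
move=> /asboolP [s12 e12] /asboolP [s23 e23]; apply/asboolP.
by split=> x T1x; [apply/s23/s12 | rewrite e23 ?e12 //; exact: s12].
Qed.

Lemma ext_chain_bound (A : set ext) : total_on A ext_le ->
  exists t, forall s, A s -> ext_le s t.
Proof.
move=> tot; have [[a0 Aa0]|noA] := pselect (exists a, A a); last first.
  by exists ext0 => s As; case: noA; exists s.
have common a b : A a -> A b -> exists c, [/\ A c, ext_le a c & ext_le b c].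
  move=> Aa Ab; case: (tot a b Aa Ab) => le_ab.
    by exists b; split=> //; exact: ext_le_refl.
  by exists a; split=> //; exact: ext_le_refl.
pose U x := exists a, A a /\ dom a x.
pose Psi x := xget 0 (fun v => exists a, [/\ A a, dom a x & v = fun_of a x]).
have PsiE a x : A a -> dom a x -> Psi x = fun_of a x.
  move=> Aa Tx; apply: xget_unique; first by exists a.
  move=> _ [b [Ab Tbx ->]].
  by case: (tot a b Aa Ab) => /asboolP [_ e]; rewrite e.
have sub a : A a -> subgroup (dom a) by move=> _; case: (svalP a).
have vU : partial_extension (U, Psi).
  split => /=.
  - split; first by exists a0; split => //; exact: (subgroup0 (sub _ Aa0)).
    move=> x y [a [Aa Tx]] [b [Ab Ty]].
    have [c [Ac /asboolP [ac _] /asboolP [bc _]]] := common a b Aa Ab.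
    by exists c; split => //; apply: (subgroupB (sub _ Ac)); [exact: ac | exact: bc].
  - by move=> x Sx; exists a0; split => //; case: (svalP a0) => _ h _ _; exact: h.
  - move=> x y [a [Aa Tx]] [b [Ab Ty]].
    have [c [Ac /asboolP [ac _] /asboolP [bc _]]] := common a b Aa Ab.
    have [Tcx Tcy] := (ac _ Tx, bc _ Ty).
    case: (svalP c) => HTc _ addc _.
    by rewrite !(PsiE c) //; [exact: addc | exact: subgroupB].
  - move=> x Sx; case: (svalP a0) => _ Sa0 _ ea0.
    by rewrite (PsiE a0) ?ea0 //; exact: Sa0.
exists (exist _ _ vU) => s As; apply/asboolP; split => /= x Tx; first by exists s.
exact: PsiE.
Qed.

Section OneStep.
Variables (t : ext) (x : G).
Let T := dom t.
Let psi := fun_of t.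
Let HT : subgroup T. Proof. by case: (svalP t). Qed.
Let psiT : additive_on T psi. Proof. by case: (svalP t). Qed.

(* Take the least n > 0 with n x in T and divide psi (n x) by n in Y. *)
Lemma ext_value : exists y : Y, forall z : int, T (x *~ z) -> psi (x *~ z) = y *~ z.
Proof.
have [[n [n0 Tn]]|none] := pselect (exists n, (0 < n)%N /\ T (x *+ n)); last first.
  exists 0 => z Tz; rewrite mul0rz.
  have [->|nz] := eqVneq z 0; first by rewrite mulr0z (additive_on0 HT psiT).
  case: none; exists `|z|%N; split; first by rewrite absz_gt0.
  case: z Tz {nz} => k Tk //; rewrite NegzE mulrNz in Tk.
  by rewrite -[_ *+ _]opprK; exact: subgroupN.
have ex : exists n, `[< (0 < n)%N /\ T (x *+ n) >] by exists n; exact/asboolP.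
case: (ex_minnP ex) => m /asboolP [m0 Tm] minm.
have [y ey] := divY (psi (x *+ m)) m0; exists y => z Tz.
have mz : m%:Z != 0 by rewrite eqz_nat -lt0n.
have ez := divz_eq z m%:Z; set q := (z %/ m%:Z)%Z in ez; set r := (z %% m%:Z)%Z in ez.
have xz : x *~ z = (x *+ m) *~ q + x *~ r.
  by rewrite {1}ez mulrzDr mulrC mulrzA -pmulrn.
have Tr : T (x *~ r).
  have -> : x *~ r = x *~ z - (x *+ m) *~ q by rewrite xz addrC addKr.
  by apply: subgroupB => //; apply: subgroupMz.
have r0 : r = 0.
  have : (0 <= r) && (r < m%:Z) by rewrite modz_ge0 // ltz_mod.
  case: r Tr {xz ez} => [[|k]|k] // Tk /andP [_ km].
  by have := minm k.+1 (asboolT (conj (ltn0Sn k) Tk)); rewrite leqNgt -ltz_nat km.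
rewrite xz r0 addr0 (additive_onMz HT psiT q Tm) -ey pmulrn -mulrzA ez r0 addr0.
by rewrite mulrC.
Qed.

Lemma ext_step : exists t' : ext, ext_le t t' /\ dom t' x.
Proof.
have TS : forall s, S s -> T s by case: (svalP t).
have psiS : forall s, S s -> psi s = phi0 s by case: (svalP t).
have [y hy] := ext_value.
pose T' g := exists s (z : int), T s /\ g = s + x *~ z.
pose psi' g := xget 0 (fun v => exists s (z : int), [/\ T s, g = s + x *~ z & v = psi s + y *~ z]).
have psi'E s z : T s -> psi' (s + x *~ z) = psi s + y *~ z.
  move=> Ts; apply: xget_unique; first by exists s, z.
  move=> _ [s' [z' [Ts' e ->]]].
  have e' : x *~ (z' - z) = s - s' by rewrite mulrzBr -[x *~ z'](addKr s') -e addrA addrK addrC.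
  have := hy (z' - z); rewrite e' mulrzBr (psiT Ts Ts') => /(_ (subgroupB HT Ts Ts')) /eqP.
  by rewrite subr_eq => /eqP ->; rewrite addrAC subrK addrC.
have T'B : forall s1 z1 s2 z2, s1 + x *~ z1 - (s2 + x *~ z2) = (s1 - s2) + x *~ (z1 - z2).
  by move=> s1 z1 s2 z2; rewrite mulrzBr opprD addrACA.
have ext' : partial_extension (T', psi').
  split => /=.
  - split; first by exists 0, 0; rewrite mulr0z addr0; split => //; exact: subgroup0.
    move=> _ _ [s1 [z1 [T1 ->]]] [s2 [z2 [T2 ->]]].
    by exists (s1 - s2), (z1 - z2); rewrite T'B; split => //; exact: subgroupB.
  - by move=> s Ss; exists s, 0; rewrite mulr0z addr0; split => //; exact: TS.
  - move=> _ _ [s1 [z1 [T1 ->]]] [s2 [z2 [T2 ->]]].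
    rewrite T'B !psi'E //; last exact: subgroupB.
    by rewrite psiT // mulrzBr opprD addrACA.
  - by move=> s Ss; rewrite -[s]addr0 -(mulr0z x) psi'E ?mulr0z ?addr0 ?psiS //; exact: TS.
exists (exist _ _ ext'); split => /=.
  apply/asboolP; split => /= s Ts; first by exists s, 0; rewrite mulr0z addr0.
  by rewrite -[s]addr0 -(mulr0z x) psi'E // mulr0z !addr0.
by exists 0, 1; rewrite add0r; split => //; exact: subgroup0.
Qed.

End OneStep.

Lemma divisible_extension : exists phi : G -> Y, is_hom phi /\ forall x, S x -> phi x = phi0 x.
Proof.
have [t tmax] := ZL_preorder ext0 ext_le_refl ext_le_trans ext_chain_bound.
have domT x : dom t x.
  by have [t' [le_tt' T'x]] := ext_step t x; have /asboolP [+ _] := tmax t' le_tt'; apply.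
case: (svalP t) => _ _ addt et; exists (fun_of t); split => // a b; exact: addt.
Qed.

End DivisibleExtension.

(** * The direct sum of countably many Prüfer p-groups *)

Lemma take_poly1 (R : nzSemiRingType) (q : {poly R}) : take_poly 1 q = (q`_0)%:P.
Proof. by apply/polyP => i; rewrite coef_take_poly coefC; case: i. Qed.

(* [Yp] is Q[X] / Z_(p)[X]; [eY k], the class of X^k / p, generates the socle of the
   k-th summand. *)
Section PruferSum.
Variables (p : nat) (hp : prime p).

Definition p_integral (a : rat) := exists u v : int, ~~ (p%:Z %| v)%Z /\ a = u%:~R / v%:~R.

Let p_ndvd1 : ~~ (p%:Z %| 1)%Z.
Proof. by rewrite dvdzE /= dvdn1; case: p hp => [|[|]]. Qed.

Let p_ndvd_neq0 (v : int) : ~~ (p%:Z %| v)%Z -> v%:~R != 0 :> rat.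
Proof. by rewrite intr_eq0; apply: contra => /eqP ->; rewrite dvdz0. Qed.

Let pnat_neq0 : p%:R != 0 :> rat.
Proof. by rewrite pnatr_eq0; case: p hp. Qed.

Lemma subgroup_p_integral : subgroup p_integral.
Proof.
split; first by exists 0, 1; rewrite mul0r.
move=> _ _ [u [v [pv ->]]] [u' [v' [pv' ->]]].
exists (u * v' - u' * v), (v * v'); split.
  by rewrite dvdzE abszM Euclid_dvdM // -!dvdzE negb_or pv pv'.
by rewrite intrB !intrM; field; rewrite !p_ndvd_neq0.
Qed.

Let Hp := subgroup_p_integral.

Lemma p_integral_int (z : int) : p_integral z%:~R.
Proof. by exists z, 1; rewrite divr1. Qed.

Lemma p_integral_inv_p : ~ p_integral p%:R^-1.
Proof.
move=> [u [v [pv e]]].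
have : v%:~R = p%:R * u%:~R :> rat.
  by rewrite -[u%:~R](divfK (p_ndvd_neq0 pv)) -e mulrA mulfV // mul1r.
rewrite -[p%:R]/((p%:Z)%:~R) -intrM => /eqP; rewrite eqr_int => /eqP ev.
by move: pv; rewrite ev dvdz_mulr.
Qed.

Lemma p_integral_Mpn (a : rat) : exists n, p_integral (a *+ (p ^ n)).
Proof.
have d0 : (0 < `|denq a|)%N by rewrite absz_gt0 denq_neq0.
have [m cop e] := pfactor_coprime hp d0.
exists (logn p `|denq a|), (numq a), m; split; first by rewrite dvdzE /= -prime_coprime.
have m0 : m%:R != 0 :> rat by rewrite pnatr_eq0; apply/eqP => m0; move: e d0; rewrite m0 => ->.
have pn0 : (p ^ logn p `|denq a|)%:R != 0 :> rat by rewrite pnatr_eq0 expn_eq0; case: p hp.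
have ed : (denq a)%:~R = m%:R * (p ^ logn p `|denq a|)%:R :> rat.
  have -> : denq a = `|denq a|%N :> int by rewrite gtz0_abs ?denq_gt0.
  by rewrite -natrM -e.
by rewrite -{1}(divq_num_den a) ed -mulr_natr; field; rewrite m0 pn0.
Qed.

Definition p_integral_poly (q : {poly rat}) := forall i, p_integral q`_i.

Lemma subgroup_p_integral_poly : subgroup p_integral_poly.
Proof.
split=> [i | a b ha hb i]; first by rewrite coef0; exact: subgroup0 Hp.
by rewrite coefB; exact: subgroupB.
Qed.
Let HP := subgroup_p_integral_poly.

Lemma p_integral_polyMX q : p_integral_poly (q * 'X) <-> p_integral_poly q.
Proof.
split=> Pq i; first by have := Pq i.+1; rewrite coefMX.
by rewrite coefMX; case: ifP => _; [exact: subgroup0 Hp | exact: Pq].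
Qed.

Definition Yp := quot HP.
Local Notation piY := (qpi HP).
Let piY_hom : is_hom piY := qpi_hom HP.

Lemma divisible_Yp : divisible Yp.
Proof.
move=> z n n0; have [q ->] := qpi_surj z.
exists (piY (n%:R^-1 *: q)); rewrite -(homMn piY_hom) scalerMnl.
by rewrite -mulr_natr mulVf ?scale1r // pnatr_eq0 -lt0n.
Qed.

Definition eY k : Yp := piY (p%:R^-1 *: 'X^k).

Lemma eY_order k : eY k *+ p = 0.
Proof.
rewrite -(homMn piY_hom) scalerMnl -mulr_natr mulVf // scale1r.
apply/qpi_eq0 => i; rewrite coefXn; case: (i == k); last exact: subgroup0 Hp.
exact: (p_integral_int 1).
Qed.

(* Yp = X Yp (+) piY(Q), and multiplication by X maps Yp isomorphically onto X Yp. *)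
Lemma Yp_not_directly_finite : ~ directly_finite Yp.
Proof.
pose f (z : Yp) := piY (qrep (HS := HP) z * 'X).
have fE q : f (piY q) = piY (q * 'X).
  by apply/qpiE; rewrite -mulrBl; apply/p_integral_polyMX; exact: qrep_qpi.
have hf : is_hom f.
  move=> z z'; have [[q ->] [q' ->]] := (qpi_surj z, qpi_surj z').
  by rewrite -piY_hom !fE mulrBl piY_hom.
have hC : is_hom (piY \o polyC) by move=> a b /=; rewrite polyCB piY_hom.
move/directly_finiteP; apply.
exists (img f (fun _ => True)), (img (piY \o polyC) (fun _ => True)), f; split; last first.
  exists (piY (p%:R^-1)%:P); split; first by exists p%:R^-1.
  by move/qpi_eq0 => /(_ 0%N); rewrite coefC; exact: p_integral_inv_p.
split=> //; first (split; [exact: subgroup_img | exact: subgroup_img | |]).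
- move=> _ [z [_ ->]] [c [_ /= e]]; have [q ez] := qpi_surj z.
  have Pc : p_integral c.
    have := e; rewrite ez fE => /qpiE /(_ 0%N).
    by rewrite coefB coefMX coefC /= sub0r => /(subgroupN Hp); rewrite opprK.
  rewrite e; apply/qpi_eq0 => i.
  by rewrite coefC; case: ifP => _; [exact: Pc | exact: subgroup0 Hp].
- move=> z; have [q ->] := qpi_surj z.
  exists (f (piY (drop_poly 1 q))), (piY (q`_0)%:P); split; first by exists (piY (drop_poly 1 q)).
  split; first by exists q`_0.
  have := poly_take_drop 1 q; rewrite expr1 take_poly1 => {1}<-.
  by rewrite fE -(homD piY_hom) addrC.
- move=> z z'; have [[q ->] [q' ->]] := (qpi_surj z, qpi_surj z').
  by rewrite !fE => /qpiE; rewrite -mulrBl => /p_integral_polyMX Pq; apply/qpiE.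
- by move=> z; split=> [[g [_ ->]] | [g <-]]; exists g.
Qed.

Section Generation.
Variables (I : Yp -> Prop) (HI : subgroup I).
Hypotheses (dI : divisible_in I) (eI : forall k, I (eY k)).

(* Bezout: if c p = u / v with p coprime to v, then c X^k = (u b) eY k mod Z_(p)[X]. *)
Lemma Yp_monomial_mem (c : rat) k : p_integral (c *+ p) -> I (piY (c *: 'X^k)).
Proof.
move=> [u [v [pv e]]].
have /coprimezP [[a b] /= hab] : coprimez p%:Z v by rewrite coprimezE prime_coprime // -dvdzE.
have v0 := p_ndvd_neq0 pv.
have eb : b%:~R = (1 - a%:~R * p%:R) / v%:~R :> rat.
  have hab' : a%:~R * p%:R + b%:~R * v%:~R = 1 :> rat.
    by rewrite -[p%:R]/((p%:Z)%:~R) -!intrM -intrD hab.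
  move: hab'; set a' := a%:~R; set b' := b%:~R; set p' := p%:R; set v' := v%:~R => <-.
  by rewrite addrAC subrr add0r mulfK.
have ec : c = u%:~R / v%:~R / p%:R by rewrite -e -[c *+ p]mulr_natr mulfK.
suff -> : piY (c *: 'X^k) = eY k *~ (u * b) by exact: subgroupMz.
rewrite /eY -(homMz piY_hom) scalerMzl; apply/qpiE; rewrite -scalerBl => i.
rewrite coefZ coefXn; case: (i == k); rewrite ?mulr0 ?mulr1; last exact: subgroup0 Hp.
exists (u * a), v; split => //.
by rewrite ec -[_ *~ (u * b)]mulrzl !intrM eb; field; rewrite v0.
Qed.

Lemma Yp_mem_p s : p_integral_poly (s *+ p) -> I (piY s).
Proof.
move=> Ps; rewrite -[s]coefK poly_def (hom_sum piY_hom).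
by apply: (subgroup_sum HI) => i _; apply: Yp_monomial_mem; rewrite -coefMn.
Qed.

Lemma Yp_mem_pn n s : p_integral_poly (s *+ (p ^ n)) -> I (piY s).
Proof.
elim: n s => [|n IH] s Ps.
  by move: Ps; rewrite expn0 mulr1n => /qpi_eq0 ->; exact: subgroup0.
have Isp : I (piY s *+ p) by rewrite -(homMn piY_hom); apply: IH; rewrite -mulrnA -expnS.
have [y [Iy ey]] := dI Isp (prime_gt0 hp).
have [r er] := qpi_surj y.
have /qpi_eq0 /Yp_mem_p Irs : piY ((r - s) *+ p) = 0.
  by rewrite !(homMn piY_hom) piY_hom mulrnBl -er ey subrr.
have -> : piY s = piY r - piY (r - s) by rewrite piY_hom opprB addrC subrK.
by apply: subgroupB; rewrite -?er.
Qed.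

Lemma Yp_generated z : I z.
Proof.
have [q ->] := qpi_surj z.
have [n Pn] : exists n, forall i, (i < size q)%N -> p_integral (q`_i *+ (p ^ n)).
  elim: (size q) => [|N [n IH]]; first by exists 0%N.
  have [m Pm] := p_integral_Mpn q`_N.
  exists (n + m)%N => i; rewrite ltnS leq_eqVlt => /orP [/eqP -> | iN].
    by rewrite expnD mulnC mulrnA; exact: subgroupMn.
  by rewrite expnD mulrnA; apply: subgroupMn => //; exact: IH.
apply: (Yp_mem_pn (n := n)) => i; rewrite coefMn.
have [/Pn // | hi] := ltnP i (size q).
by rewrite nth_default // mul0rn; exact: subgroup0.
Qed.

End Generation.

End PruferSum.

(** * Independent sequences of elements of order p *)

Definition lincomb (V : zmodType) (w : nat -> V) (N : nat) (n : nat -> int) : V :=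
  \sum_(0 <= k < N) w k *~ n k.

Definition pad (N : nat) (n : nat -> int) k : int := if (k < N)%N then n k else 0.

Lemma lincomb_pad (V : zmodType) (w : nat -> V) N M (n : nat -> int) : (N <= M)%N ->
  lincomb w N n = lincomb w M (pad N n).
Proof.
move=> NM; rewrite /lincomb (big_cat_nat (leq0n N) NM) /= [X in _ = _ + X]big_nat_cond.
rewrite [X in _ = _ + X]big1 ?addr0; last first.
  by move=> k /andP [/andP [Nk _] _]; rewrite /pad ltnNge Nk mulr0z.
by apply: eq_big_nat => k /andP [_ kN]; rewrite /pad kN.
Qed.

Lemma lincombB (V : zmodType) (w : nat -> V) N1 n1 N2 n2 :
  lincomb w N1 n1 - lincomb w N2 n2 =
  lincomb w (maxn N1 N2) (fun k => pad N1 n1 k - pad N2 n2 k).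
Proof.
rewrite (lincomb_pad _ _ (leq_maxl N1 N2)) (lincomb_pad _ _ (leq_maxr N1 N2)) -sumrB.
by apply: eq_bigr => k _; rewrite mulrzBr.
Qed.

Lemma lincomb0 (V : zmodType) (w : nat -> V) (n : nat -> int) : lincomb w 0 n = 0.
Proof. by rewrite /lincomb big_geq. Qed.

Lemma lincomb_delta (V : zmodType) (w : nat -> V) k :
  lincomb w k.+1 (fun j => (j == k)%:Z) = w k.
Proof.
rewrite /lincomb big_nat_recr //= eqxx mulr1z big_nat_cond big1 ?add0r //.
by move=> j /andP [/andP [_ jk] _]; rewrite (ltn_eqF jk) mulr0z.
Qed.

Lemma mulrz_order (V : zmodType) (y : V) (p : nat) (z : int) :
  y *+ p = 0 -> (p%:Z %| z)%Z -> y *~ z = 0.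
Proof. by move=> yp /dvdzP [j ->]; rewrite mulrC mulrzA -pmulrn yp mul0rz. Qed.

(* [w] is linearly independent over Z/p modulo [B]. *)
Definition independent_mod (H : zmodType) (B : H -> Prop) (p : nat) (w : nat -> H) :=
  forall N (n : nat -> int), B (lincomb w N n) -> forall k, (k < N)%N -> (p%:Z %| n k)%Z.

Section IndependentFamily.
Variables (H : zmodType) (p : nat) (hp : prime p) (B : H -> Prop) (w : nat -> H).
Hypothesis HB : subgroup B.
Hypothesis w_indep : independent_mod B p w.

Local Notation e := (eY hp).

Definition span_mod x := exists b N (n : nat -> int), B b /\ x = b + lincomb w N n.

Lemma subgroup_span_mod : subgroup span_mod.
Proof.
split; first by exists 0, 0%N, (fun _ => 0); rewrite lincomb0 addr0; split => //; exact: subgroup0.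
move=> _ _ [b1 [N1 [n1 [B1 ->]]]] [b2 [N2 [n2 [B2 ->]]]].
exists (b1 - b2), (maxn N1 N2), (fun k => pad N1 n1 k - pad N2 n2 k).
by rewrite -lincombB opprD addrACA; split => //; exact: subgroupB.
Qed.

(* b + sum n_k w_k is sent to sum n_k e_k; independence makes this well defined. *)
Definition span_map x : Yp hp := xget 0 (fun v => exists b N (n : nat -> int),
  [/\ B b, x = b + lincomb w N n & v = lincomb e N n]).

Lemma span_mapE b N n : B b -> span_map (b + lincomb w N n) = lincomb e N n.
Proof.
move=> Bb; apply: xget_unique; first by exists b, N, n.
move=> _ [b' [N' [n' [Bb' eq ->]]]]; apply/eqP; rewrite -subr_eq0 lincombB.
have : B (lincomb w (maxn N' N) (fun k => pad N' n' k - pad N n k)).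
  by rewrite -lincombB -[lincomb w N' n'](addKr b') -eq addrA addrK addrC; exact: subgroupB.
move=> /w_indep indep; apply/eqP; rewrite /lincomb big_nat_cond big1 //.
by move=> k /andP [/andP [_ kN] _]; apply: mulrz_order (eY_order hp k) (indep k kN).
Qed.

Lemma additive_on_span_map : additive_on span_mod span_map.
Proof.
move=> _ _ [b1 [N1 [n1 [B1 ->]]]] [b2 [N2 [n2 [B2 ->]]]].
by rewrite opprD addrACA lincombB !span_mapE ?lincombB //; exact: subgroupB.
Qed.

Lemma hom_onto_Yp : exists phi : H -> Yp hp,
  [/\ is_hom phi, (forall b, B b -> phi b = 0) & forall k, phi (w k) = e k].
Proof.
have [phi [hphi ephi]] :=
  divisible_extension (@divisible_Yp p hp) subgroup_span_mod additive_on_span_map.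
have spanB b : B b -> span_mod b by exists b, 0%N, (fun _ => 0); rewrite lincomb0 addr0.
exists phi; split => //.
  move=> b Bb; rewrite ephi; last exact: spanB.
  have := span_mapE 0%N (fun _ => 0) Bb.
  by rewrite !lincomb0 addr0 => ->.
move=> k; have B0 := subgroup0 HB.
rewrite -(lincomb_delta w k) ephi; last by exists 0, k.+1, (fun j => (j == k)%:Z); rewrite add0r.
by rewrite -[lincomb w _ _]add0r span_mapE // lincomb_delta.
Qed.

Lemma independent_not_super_directly_finite (X : zmodType) (g : X -> H) (W : H -> Prop) :
  is_hom g -> subgroup W -> divisible_in W ->
  (forall x, W x -> exists b y, B b /\ x = b + g y) -> (forall k, W (w k)) ->
  ~ super_directly_finite X.
Proof.
move=> hg HW dW cover Ww SX.
have [phi [hphi phiB phiw]] := hom_onto_Yp.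
have Yall := Yp_generated (subgroup_img hphi HW) (divisible_in_img hphi dW)
  (fun k => ex_intro _ (w k) (conj (Ww k) (esym (phiw k)))).
apply: (@Yp_not_directly_finite p hp); apply: (SX _ (phi \o g)); first exact: is_hom_comp.
move=> y; have [x [Wx ->]] := Yall y; have [b [z [Bb ->]]] := cover _ Wx.
by exists z; rewrite /= (homD hphi) (phiB b Bb) add0r.
Qed.

End IndependentFamily.

Definition finite_pred (H : zmodType) (P : H -> Prop) := exists L : seq H, forall x, P x -> x \in L.

Lemma finite_pred_sub (H : zmodType) (P Q : H -> Prop) :
  (forall x, P x -> Q x) -> finite_pred Q -> finite_pred P.
Proof. by move=> PQ [L hL]; exists L => x /PQ /hL. Qed.

Lemma finite_pred_addr (H : zmodType) (P : H -> Prop) (L : seq H) : finite_pred P ->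
  finite_pred (fun z => exists x y, [/\ P x, y \in L & z = x + y]).
Proof.
move=> [L1 h1]; exists [seq x + y | x <- L1, y <- L] => _ [x [y [Px yL ->]]].
by apply: allpairs_f => //; exact: h1.
Qed.

Lemma finite_pred_inj_surj (H : zmodType) (W : H -> Prop) (f : H -> H) :
  finite_pred W -> (forall x, W x -> W (f x)) -> injective f ->
  forall c, W c -> exists x, W x /\ f x = c.
Proof.
move=> [L hL] fW finj c Wc.
pose L' := undup [seq x <- L | `[< W x >]].
have memL' x : (x \in L') = `[< W x >].
  rewrite mem_undup mem_filter; apply/idP/idP => [/andP [] // | /[dup] /asboolP Wx ->].
  by rewrite hL.
have sub : {subset map f L' <= L'}.
  by move=> _ /mapP [x xL ->]; rewrite memL'; apply/asboolP/fW/asboolP; rewrite -memL'.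
have U : uniq (map f L') by rewrite map_inj_uniq ?undup_uniq.
have [_ eqL'] := uniq_min_size U sub (eq_leq (esym (size_map f L'))).
have : c \in map f L' by rewrite eqL' memL'; exact/asboolP.
by case/mapP => x xL ->; exists x; split => //; apply/asboolP; rewrite -memL'.
Qed.

Lemma mulrz_mod_order (H : zmodType) (y : H) (p : nat) (z : int) :
  (0 < p)%N -> y *+ p = 0 -> exists r, (r < p)%N /\ y *~ z = y *+ r.
Proof.
move=> p0 yp; have pz : p%:Z != 0 by rewrite eqz_nat -lt0n.
exists `|(z %% p%:Z)%Z|%N; split; first by rewrite -ltz_nat gez0_abs ?modz_ge0 ?ltz_mod.
rewrite pmulrn gez0_abs ?modz_ge0 // {1}(divz_eq z p%:Z) mulrzDr.
by rewrite mulrC mulrzA -pmulrn yp mul0rz add0r.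
Qed.

(* Each term is chosen outside the span of its predecessors modulo B; such a span has only
   finitely many elements of order p, so W cannot be exhausted. *)
Section Greedy.
Variables (H : zmodType) (p : nat) (hp : prime p) (B : H -> Prop) (W : H -> Prop).
Hypotheses (HB : subgroup B) (W_order : forall x, W x -> x *+ p = 0) (W_inf : ~ finite_pred W).
Hypothesis B_order_fin : finite_pred (fun x => B x /\ x *+ p = 0).

Definition span_seq (L : seq H) x := exists b (n : nat -> int),
  B b /\ x = b + lincomb (nth 0 L) (size L) n.

Lemma span_seq_order_fin L : all (fun y => y *+ p == 0) L ->
  finite_pred (fun x => span_seq L x /\ x *+ p = 0).
Proof.
elim/last_ind: L => [_ | L y IH].
  by apply: finite_pred_sub B_order_fin => x [[b [n [Bb ->]]] xp]; rewrite lincomb0 addr0 in xp *.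
rewrite all_rcons => /andP [/eqP yp /IH finL].
apply: finite_pred_sub (finite_pred_addr [seq y *+ r | r <- iota 0 p] finL).
move=> x [[b [n [Bb ->]]] xp].
have [r [rp er]] := mulrz_mod_order (n (size L)) (prime_gt0 hp) yp.
have eL : lincomb (nth 0 (rcons L y)) (size (rcons L y)) n =
    lincomb (nth 0 L) (size L) n + y *+ r.
  rewrite size_rcons /lincomb big_nat_recr //= nth_rcons ltnn eqxx er; congr (_ + _).
  by apply: eq_big_nat => i /andP [_ iL]; rewrite nth_rcons iL.
rewrite eL addrA in xp *; exists (b + lincomb (nth 0 L) (size L) n), (y *+ r).
split=> //; last by apply/mapP; exists r; rewrite ?mem_iota.
split; first by exists b, n.
set s := b + _ in xp *.
have -> : s *+ p = (s + y *+ r) *+ p - (y *+ r) *+ p by rewrite [in RHS]mulrnDl addrK.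
by rewrite xp -mulrnA mulnC mulrnA yp mul0rn subrr.
Qed.

Definition greedy_next (L : seq H) := xget 0 (fun x => W x /\ ~ span_seq L x).

Lemma greedy_nextP L : all (fun y => y *+ p == 0) L ->
  W (greedy_next L) /\ ~ span_seq L (greedy_next L).
Proof.
move=> hL; apply: (@xgetPex _ 0 (fun x => W x /\ ~ span_seq L x)).
apply: contrapT => none; apply: W_inf.
apply: finite_pred_sub (span_seq_order_fin hL) => x Wx; split; last exact: W_order.
by apply: contrapT => nx; apply: none; exists x.
Qed.

Fixpoint greedy_seq (k : nat) : seq H :=
  if k is k'.+1 then rcons (greedy_seq k') (greedy_next (greedy_seq k')) else [::].

Definition greedy k := greedy_next (greedy_seq k).

Lemma greedy_seqE k : greedy_seq k = mkseq greedy k.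
Proof. by elim: k => //= k IH; rewrite mkseqS -IH. Qed.

Lemma greedyP k : W (greedy k) /\ ~ span_seq (mkseq greedy k) (greedy k).
Proof.
rewrite -greedy_seqE; apply: greedy_nextP; elim: k => //= k IH.
by rewrite all_rcons IH andbT; apply/eqP/W_order; case: (greedy_nextP IH).
Qed.

Lemma greedy_order k : greedy k *+ p = 0. Proof. by apply: W_order; case: (greedyP k). Qed.

(* If n_N is prime to p, then a p + b n_N = 1 expresses w_N through w_0, ..., w_(N-1) mod B. *)
Lemma greedy_independent : independent_mod B p greedy.
Proof.
elim=> [|N IH] n //; rewrite /lincomb big_nat_recr //= -/(lincomb greedy N n) => hB.
have [dN | ndN] := boolP (p%:Z %| n N)%Z.
  move: hB; rewrite (mulrz_order (greedy_order N) dN) addr0 => /IH indep k.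
  by rewrite ltnS leq_eqVlt => /orP [/eqP -> | /indep].
exfalso.
have /coprimezP [[a b] /= hab] : coprimez p%:Z (n N) by rewrite coprimezE prime_coprime // -dvdzE.
set u := lincomb greedy N n + greedy N *~ n N in hB.
have ew : greedy N = u *~ b + lincomb greedy N (fun k => - (n k * b)).
  rewrite /u mulrzDl addrAC.
  have -> : lincomb greedy N n *~ b + lincomb greedy N (fun k => - (n k * b)) = 0.
    rewrite /lincomb mulrz_suml -big_split big_nat_cond big1 //= => k _.
    by rewrite mulrNz -mulrzA subrr.
  rewrite add0r -mulrzA -[LHS]mulr1z -hab mulrzDr [a * _]mulrC [greedy N *~ (_ * a)]mulrzA.
  by rewrite -pmulrn greedy_order mul0rz add0r mulrC.
case: (greedyP N) => _; apply; exists (u *~ b), (fun k => - (n k * b)).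
split; first exact: subgroupMz.
rewrite size_mkseq {1}ew; congr (_ + _); apply: eq_big_nat => k /andP [_ kN].
by rewrite nth_mkseq.
Qed.

Lemma independent_seq_of_infinite : exists w, (forall k, W (w k)) /\ independent_mod B p w.
Proof. by exists greedy; split=> [k | ]; [case: (greedyP k) | exact: greedy_independent]. Qed.

End Greedy.

Lemma torsion_free_of_prime (H : zmodType) (C : H -> Prop) : subgroup C ->
  (forall p c, prime p -> C c -> c *+ p = 0 -> c = 0) ->
  forall n c, (0 < n)%N -> C c -> c *+ n = 0 -> c = 0.
Proof.
move=> HC noprime; elim/ltn_ind => n IH c n0 Cc cn.
have [n1 | /pdiv_prime pr_n] := leqP n 1.
  by move: cn; have -> : n = 1%N by apply/anti_leq; rewrite n1 n0.
have pn := pdiv_dvd n; set p := pdiv n in pr_n pn.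
have m0 : (0 < n %/ p)%N by rewrite divn_gt0 ?prime_gt0 // dvdn_leq.
have mn : (n %/ p < n)%N by rewrite ltn_Pdiv ?prime_gt1.
apply: (IH _ mn c m0 Cc); apply: (noprime p) => //; first exact: subgroupMn.
by rewrite -mulrnA divnK.
Qed.

Lemma mulrz_eq0_abs (H : zmodType) (x : H) (z : int) : x *~ z = 0 -> x *+ `|z|%N = 0.
Proof. by case: z => n //; rewrite NegzE mulrNz => /eqP; rewrite oppr_eq0 => /eqP. Qed.

Section FClosure.
Variables (H : zmodType) (A C : H -> Prop) (f : H -> H) (c : H).
Hypotheses (dec : self_decomposition A C f) (Cc : C c).
Let hAC := sdec_compl dec.
Let HC := compl_subr hAC.
Let hf := sdec_hom dec.

Definition fclosure x :=
  forall T : H -> Prop, subgroup T -> T c -> (forall y, T y -> T (f y)) -> T x.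

Lemma subgroup_fclosure : subgroup fclosure.
Proof.
split=> [T HT _ _ | x y Kx Ky T HT Tc Tf]; first exact: subgroup0.
by apply: subgroupB => //; [exact: Kx | exact: Ky].
Qed.
Let HK := subgroup_fclosure.

Lemma fclosure_c : fclosure c. Proof. by []. Qed.

Lemma fclosure_f y : fclosure y -> fclosure (f y).
Proof. by move=> Ky T HT Tc Tf; exact: (Tf _ (Ky T HT Tc Tf)). Qed.

Lemma fclosureP x : fclosure x -> exists (n : int) y, fclosure y /\ x = c *~ n + f y.
Proof.
move=> Kx; apply: (Kx (fun x => exists (n : int) y, fclosure y /\ x = c *~ n + f y)).
- split; first by exists 0, 0; rewrite mulr0z hom0 // addr0; split => //; exact: (subgroup0 HK).
  move=> _ _ [n1 [y1 [K1 ->]]] [n2 [y2 [K2 ->]]].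
  exists (n1 - n2), (y1 - y2); rewrite mulrzBr hf opprD addrACA; split => //.
  exact: (subgroupB HK).
- by exists 1, 0; rewrite mulr1z hom0 // addr0; split => //; exact: (subgroup0 HK).
- move=> y [n [y' [Ky' ->]]]; exists 0, (c *~ n + f y'); rewrite mulr0z add0r; split => //.
  by apply: (subgroupD HK); [exact: (subgroupMz HK) | exact: fclosure_f].
Qed.

Lemma fclosure_f_inv x : fclosure (f x) -> fclosure x.
Proof.
move=> /fclosureP [n [y [Ky e]]].
have ecn : c *~ n = f (x - y) by rewrite hf e addrK.
have cn0 : c *~ n = 0.
  by apply: (compl_cap hAC); [rewrite ecn; exact: (sdec_fA dec) | exact: (subgroupMz HC)].
have /eqP : x - y = 0 by apply: (sdec_inj dec); rewrite hom0 // -ecn cn0.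
by rewrite subr_eq0 => /eqP ->.
Qed.

Lemma fclosure_projl a c' : A a -> C c' -> fclosure (a + c') -> fclosure a.
Proof.
move=> Aa Cc' /fclosureP [n [y [Ky e]]].
have [-> _] : a = f y /\ c' = c *~ n.
  apply: (compl_unique hAC) => //; [exact: (sdec_fA dec) | exact: (subgroupMz HC) |].
  by rewrite e addrC.
exact: fclosure_f.
Qed.

Lemma fclosure_half c1 : (forall n x, (0 < n)%N -> C x -> x *+ n = 0 -> x = 0) ->
  C c1 -> c1 *+ 2 = c -> c <> 0 -> ~ fclosure c1.
Proof.
move=> tf Cc1 ec1 nc /fclosureP [n [y [Ky e]]].
have fy0 : f y = 0.
  apply: (compl_cap hAC); first exact: (sdec_fA dec).
  rewrite -[f y](addKr (c *~ n)) -e.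
  by apply: (subgroupD HC) Cc1; apply: (subgroupN HC); exact: (subgroupMz HC).
have : c1 *~ (1 - 2 * n) = 0 by rewrite mulrzBr mulr1z mulrzA -pmulrn ec1 e fy0 addr0 subrr.
move/mulrz_eq0_abs/(tf _ _ _ Cc1) => c10; apply: nc; rewrite -ec1 c10 ?mul0rn //.
by rewrite absz_gt0; lia.
Qed.

End FClosure.

Section Main.
Variables (D R : zmodType).
Hypotheses (divD : divisible D) (SD : super_directly_finite D) (SR : super_directly_finite R).

Section Image.
Variables (H : zmodType) (q : D * R -> H).
Hypotheses (hq : is_hom q) (q_surj : forall h, exists g, q g = h).

Let gD (d : D) := q (d, 0).
Let gR (r : R) := q (0, r).
Let hom_gD : is_hom gD.
Proof. by move=> x y; rewrite /gD -hq -[(_, _) - _]/(_ - _, _ - _) subrr. Qed.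
Let hom_gR : is_hom gR.
Proof. by move=> x y; rewrite /gR -hq -[(_, _) - _]/(_ - _, _ - _) subrr. Qed.

Let q_split h : exists d r, h = gD d + gR r.
Proof.
have [[d r] <-] := q_surj h; exists d, r.
by rewrite /gD /gR -homD // -[(_, _) + _]/(_ + _, _ + _) addr0 add0r.
Qed.

Let imD := img gD (fun _ => True).
Let subgroup_imD : subgroup imD. Proof. exact: subgroup_img. Qed.
Let divisible_in_imD : divisible_in imD.
Proof.
by apply: divisible_in_img => // d n _ n0; have [y <-] := divD d n0; exists y.
Qed.

Lemma finite_imD_order p : prime p -> finite_pred (fun x => imD x /\ x *+ p = 0).
Proof.
move=> pp; apply: contrapT => inf.
have B0 : subgroup (fun x : H => x = 0) by split=> // x y -> ->; rewrite subrr.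
have B0_fin : finite_pred (fun x : H => x = 0 /\ x *+ p = 0).
  by exists [:: 0] => x [-> _]; rewrite inE.
have [w [Ww indep]] :=
  independent_seq_of_infinite pp B0 (fun x (Wx : imD x /\ _) => Wx.2) inf B0_fin.
apply: (independent_not_super_directly_finite pp B0 indep hom_gD subgroup_imD) => //.
- by move=> _ [d [_ ->]]; exists 0, d; rewrite add0r.
- by move=> k; case: (Ww k).
Qed.

Lemma finite_divisible_part_order p : prime p ->
  finite_pred (fun x : H => divisible_part x /\ x *+ p = 0).
Proof.
move=> pp; apply: contrapT => inf.
have [w [Ww indep]] :=
  independent_seq_of_infinite pp subgroup_imD (fun x (Wx : divisible_part x /\ _) => Wx.2)
    inf (finite_imD_order pp).
apply: (independent_not_super_directly_finite pp subgroup_imD indep hom_gR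
  (subgroup_divisible_part H) (@divisible_in_divisible_part H)) => //.
- by move=> x _; have [d [r ->]] := q_split x; exists (gD d), r; split => //; exists d.
- by move=> k; case: (Ww k).
Qed.

Section Decomposition.
Variables (A C : H -> Prop) (f : H -> H).
Hypothesis dec : self_decomposition A C f.
Let hAC := sdec_compl dec.
Let hf := sdec_hom dec.

Lemma sdec_C_divisible c : C c -> divisible_part c.
Proof.
move=> Cc; apply: contrapT => ndc.
have Hd := subgroup_divisible_part H.
have decq := quot_self_decomposition dec Hd (divisible_part_f dec)
  (divisible_part_f_inv dec) (divisible_part_projl hAC).
have qsurj z : exists r, (qpi Hd \o gR) r = z.
  have [h ->] := qpi_surj z; have [d [r ->]] := q_split h.
  exists r; apply/qpiE; rewrite opprD addrA addrAC subrr add0r; apply: subgroupN => //.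
  by apply: (divisible_part_max subgroup_imD divisible_in_imD); exists d.
have /directly_finiteP := SR (is_hom_comp hom_gR (qpi_hom Hd)) qsurj; apply.
exists (img (qpi Hd) A), (img (qpi Hd) C), (quot_map f (HS := Hd)); split => //.
by exists (qpi Hd c); split; [exists c | move/qpi_eq0].
Qed.

Lemma sdec_C_prime_order p c : prime p -> C c -> c *+ p = 0 -> c = 0.
Proof.
move=> pp Cc cp.
have fW x : divisible_part x /\ x *+ p = 0 -> divisible_part (f x) /\ f x *+ p = 0.
  by move=> [dx xp]; split; [exact: (divisible_part_f dec) | rewrite -(homMn hf) xp hom0].
have [x [_ fxc]] := finite_pred_inj_surj (finite_divisible_part_order pp) fW (sdec_inj dec)
  (conj (sdec_C_divisible Cc) cp).
rewrite -fxc in Cc *; apply: (compl_cap hAC) Cc; exact: (sdec_fA dec).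
Qed.

End Decomposition.
End Image.

Lemma epimorphic_image_directly_finite (H : zmodType) (q : D * R -> H) :
  is_hom q -> (forall h, exists g, q g = h) -> directly_finite H.
Proof.
move=> hq q_surj; apply/directly_finiteP => [[A [C [f [dec [c [Cc nc]]]]]]].
have hAC := sdec_compl dec; have HC := compl_subr hAC.
have tf := torsion_free_of_prime HC (sdec_C_prime_order hq q_surj dec).
have [c1 [[Cc1 _] ec1]] := divisible_in_part_l (complementary_sym hAC)
  (conj Cc (sdec_C_divisible hq q_surj dec Cc)) (ltn0Sn 1).
have HK := subgroup_fclosure f c.
have nKc1 := fclosure_half dec Cc tf Cc1 ec1 nc.
have decq := quot_self_decomposition dec HK (@fclosure_f _ f c) (fclosure_f_inv dec Cc)
  (fclosure_projl dec Cc).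
have qsurj z : exists g, (qpi HK \o q) g = z.
  by have [h ->] := qpi_surj z; have [g <-] := q_surj h; exists g.
apply/nKc1/(qpi_eq0 HK).
apply: (sdec_C_prime_order (is_hom_comp hq (qpi_hom HK)) qsurj decq (p := 2)) => //.
- by exists c1.
- by rewrite -(homMn (qpi_hom HK)) ec1; apply/qpi_eq0; exact: fclosure_c.
Qed.

End Main.

Lemma super_directly_finite_img (G G' : zmodType) (p : G -> G') :
  is_hom p -> (forall y, exists x, p x = y) ->
  super_directly_finite G -> super_directly_finite G'.
Proof.
move=> hp p_surj SG H r hr r_surj; apply: (SG H (r \o p)); first exact: is_hom_comp.
by move=> h; have [y <-] := r_surj h; have [x <-] := p_surj y; exists x.
Qed.

Theorem proposition5p2 (D R : zmodType) :
  divisible D -> reduced R ->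
  (super_directly_finite (D * R)%type <->
   super_directly_finite D /\ super_directly_finite R).
Proof.
move=> divD _; split=> [SG | [SD SR] H q]; last exact: epimorphic_image_directly_finite.
split.
- by apply: (@super_directly_finite_img _ _ fst) SG => [[x1 x2] [y1 y2] | d] //; exists (d, 0).
- by apply: (@super_directly_finite_img _ _ snd) SG => [[x1 x2] [y1 y2] | r] //; exists (0, r).
Qed.
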